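(* Let $(X,d)$ be a metric space (not necessarily complete) with $|X|\geqslant 3$, and let $T\colon X\to X$ be continuous. Suppose: (i) $T$ has no periodic points of prime period $2$, i.e. $T(T(x))\neq x$ for every $x\in X$ with $Tx\neq x$; (ii) there is an everywhere dense subset $M\subseteq X$ and constants $\alpha,\lambda\geqslant 0$ with $2\alpha+\frac{3\lambda}{2}<1$ such that $$d(Tx,Ty)+d(Ty,Tz)+d(Tx,Tz)\leqslant \alpha\big(d(x,y)+d(y,z)+d(z,x)\big)+\lambda\big(d(x,Tx)+d(y,Ty)+d(z,Tz)\big)$$ for all pairwise distinct $x,y,z\in M$; (iii) there exists $x_0\in X$ such that the sequence of iterates $x_n=Tx_{n-1}$, $n=1,2,\dots$, has a subsequence $(x_{n_k})$ converging to a point $x^*\in X$. Then $x^*$ is a fixed point of $T$, and $T$ has at most two fixed points. *)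

From Stdlib Require Export Reals.
Open Scope R_scope.

Record is_metric (X : Type) (d : X -> X -> R) : Prop := {
  metric_nonneg : forall x y, 0 <= d x y;
  metric_eq0 : forall x y, d x y = 0 <-> x = y;
  metric_sym : forall x y, d x y = d y x;
  metric_triangle : forall x y z, d x z <= d x y + d y z
}.

Definition metric_continuous {X : Type} (d : X -> X -> R) (T : X -> X) : Prop :=
  forall x eps, 0 < eps -> exists delta, 0 < delta /\
    forall y, d x y < delta -> d (T x) (T y) < eps.

Definition metric_dense {X : Type} (d : X -> X -> R) (M : X -> Prop) : Prop :=
  forall x eps, 0 < eps -> exists m, M m /\ d x m < eps.

Fixpoint iterate {X : Type} (T : X -> X) (n : nat) (x0 : X) : X :=
  match n with
  | O => x0
  | S n' => T (iterate T n' x0)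
  end.

Definition metric_converges {X : Type} (d : X -> X -> R) (u : nat -> X) (l : X) : Prop :=
  forall eps, 0 < eps -> exists N, forall k, (N <= k)%nat -> d (u k) l < eps.

From Stdlib Require Import Reals Lra Lia Classical.

(* Density of M and continuity of T extend the perimeter inequality to all
   triples of distinct points.  Along the orbit, (x_n, x_(n+1), x_(n+2)) is a
   genuine triangle as long as no fixed point is met (there are no 2-cycles),
   and the inequality gives p_(n+1) <= q p_n for the perimeters, with
   q = (alpha + lambda) / (1 - lambda/2) < 1.  Hence d(x_n, x_(n+1)) -> 0, and
   continuity forces every cluster point of the orbit to be fixed.  Three
   distinct fixed points would span a triangle of perimeter P <= alpha P. *)

Lemma geometric_decay (u : nat -> R) (q : R) :
  0 <= q < 1 -> (forall n, 0 <= u n) -> (forall n, u (S n) <= q * u n) ->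
  forall eps, 0 < eps -> exists N, forall n, (N <= n)%nat -> u n < eps.
Proof.
  intros [q_ge0 q_lt1] u_ge0 u_step eps eps_pos.
  assert (u_pow : forall n, u n <= q ^ n * u 0%nat).
  { induction n as [|n IH]; simpl; [lra|].
    pose proof (Rmult_le_compat_l q _ _ q_ge0 IH); specialize (u_step n); lra. }
  pose proof (u_ge0 0%nat).
  destruct (pow_lt_1_zero q ltac:(rewrite Rabs_right; lra) (eps / (u 0%nat + 1)))
    as [N HN].
  { apply Rdiv_lt_0_compat; lra. }
  exists N; intros n Hn; specialize (HN n Hn).
  rewrite Rabs_right in HN by (apply Rle_ge, pow_le; lra).
  apply (Rmult_lt_compat_r (u 0%nat + 1)) in HN; [|lra].
  replace (eps / (u 0%nat + 1) * (u 0%nat + 1)) with eps in HN by (field; lra).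
  pose proof (u_pow n); pose proof (pow_le q n q_ge0).
  nra.
Qed.

Lemma strictly_increasing_ge (f : nat -> nat) :
  (forall k, (f k < f (S k))%nat) -> forall k, (k <= f k)%nat.
Proof. intros Hf k; induction k; [lia | specialize (Hf k); lia]. Qed.

Section Metric.

Context {X : Type} (d : X -> X -> R).
Hypothesis d_metric : is_metric X d.

Lemma dist_refl x : d x x = 0.
Proof. apply (metric_eq0 _ _ d_metric); reflexivity. Qed.

Lemma dist_pos x y : x <> y -> 0 < d x y.
Proof.
  intros nxy; destruct (metric_nonneg _ _ d_metric x y) as [|E]; [assumption|].
  exfalso; apply nxy, (metric_eq0 _ _ d_metric); auto.
Qed.

Lemma dist_perturb a b a' b' : d a b <= d a' b' + d a a' + d b b'.
Proof.
  pose proof (metric_triangle _ _ d_metric a a' b).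
  pose proof (metric_triangle _ _ d_metric a' b' b).
  pose proof (metric_sym _ _ d_metric b' b).
  lra.
Qed.

Lemma neq_of_dist_lt x y x' y' : d x x' + d y y' < d x y -> x' <> y'.
Proof.
  intros Hlt <-.
  pose proof (metric_triangle _ _ d_metric x x' y).
  pose proof (metric_sym _ _ d_metric x' y).
  lra.
Qed.

Definition perimeter x y z := d x y + d y z + d z x.

Definition displacement (T : X -> X) x y z := d x (T x) + d y (T y) + d z (T z).

Definition contracts_perimeters (S : X -> Prop) (T : X -> X) (alpha lambda : R) :=
  forall x y z, S x -> S y -> S z -> x <> y -> y <> z -> x <> z ->
    perimeter (T x) (T y) (T z)
    <= alpha * perimeter x y z + lambda * displacement T x y z.

Definition asymptotically_regular (T : X -> X) (x0 : X) :=
  forall eps, 0 < eps -> exists N, forall n, (N <= n)%nat ->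
    d (iterate T n x0) (iterate T (S n) x0) < eps.

Lemma perimeter_pos x y z : x <> y -> 0 < perimeter x y z.
Proof.
  intros nxy; unfold perimeter.
  pose proof (dist_pos x y nxy).
  pose proof (metric_nonneg _ _ d_metric y z).
  pose proof (metric_nonneg _ _ d_metric z x).
  lra.
Qed.

Lemma perimeter_perturb x y z x' y' z' :
  perimeter x y z <= perimeter x' y' z' + 2 * (d x x' + d y y' + d z z').
Proof.
  unfold perimeter.
  pose proof (dist_perturb x y x' y').
  pose proof (dist_perturb y z y' z').
  pose proof (dist_perturb z x z' x').
  lra.
Qed.

Lemma displacement_perturb T x y z x' y' z' :
  displacement T x y z <= displacement T x' y' z'
    + (d x x' + d y y' + d z z') + (d (T x) (T x') + d (T y) (T y') + d (T z) (T z')).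
Proof.
  unfold displacement.
  pose proof (dist_perturb x (T x) x' (T x')).
  pose proof (dist_perturb y (T y) y' (T y')).
  pose proof (dist_perturb z (T z) z' (T z')).
  lra.
Qed.

Lemma dense_continuous_approx (T : X -> X) (M : X -> Prop) :
  metric_continuous d T -> metric_dense d M ->
  forall w e, 0 < e -> exists m, M m /\ d w m < e /\ d (T w) (T m) < e.
Proof.
  intros Tcont Mdense w e e_pos.
  destruct (Tcont w e e_pos) as (delta & delta_pos & Hdelta).
  destruct (Mdense w (Rmin delta e)) as (m & Mm & wm).
  { apply Rmin_glb_lt; assumption. }
  pose proof (Rmin_l delta e); pose proof (Rmin_r delta e).
  exists m; repeat split; [assumption | lra | apply Hdelta; lra].
Qed.

Lemma iterate_from_fixed (T : X -> X) x0 m :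
  T (iterate T m x0) = iterate T m x0 ->
  forall n, (m <= n)%nat -> iterate T n x0 = iterate T m x0.
Proof.
  intros Hfix n Hmn; replace n with (n - m + m)%nat by lia.
  induction (n - m)%nat as [|k IH]; [reflexivity|].
  simpl; rewrite IH; exact Hfix.
Qed.

Section PerimeterContraction.

Variables (T : X -> X) (alpha lambda : R).
Hypotheses (alpha_ge0 : 0 <= alpha) (lambda_ge0 : 0 <= lambda).

Lemma perimeter_inequality_perturb x y z x' y' z' e :
  d x x' < e -> d y y' < e -> d z z' < e ->
  d (T x) (T x') < e -> d (T y) (T y') < e -> d (T z) (T z') < e ->
  perimeter (T x') (T y') (T z')
    <= alpha * perimeter x' y' z' + lambda * displacement T x' y' z' ->
  perimeter (T x) (T y) (T z)
    <= alpha * perimeter x y z + lambda * displacement T x y z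
       + 6 * (1 + alpha + lambda) * e.
Proof.
  intros xx' yy' zz' Txx' Tyy' Tzz' Hc.
  pose proof (perimeter_perturb (T x) (T y) (T z) (T x') (T y') (T z')).
  pose proof (perimeter_perturb x' y' z' x y z) as Hp.
  pose proof (displacement_perturb T x' y' z' x y z) as Hd.
  rewrite !(metric_sym _ _ d_metric x'), !(metric_sym _ _ d_metric y'),
    !(metric_sym _ _ d_metric z') in Hp, Hd.
  rewrite !(metric_sym _ _ d_metric (T x')), !(metric_sym _ _ d_metric (T y')),
    !(metric_sym _ _ d_metric (T z')) in Hd.
  assert (alpha * perimeter x' y' z' <= alpha * (perimeter x y z + 6 * e))
    by (apply Rmult_le_compat_l; lra).
  assert (lambda * displacement T x' y' z' <= lambda * (displacement T x y z + 6 * e))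
    by (apply Rmult_le_compat_l; lra).
  lra.
Qed.

Lemma contracts_perimeters_dense_extend (M : X -> Prop) :
  metric_continuous d T -> metric_dense d M ->
  contracts_perimeters M T alpha lambda ->
  contracts_perimeters (fun _ => True) T alpha lambda.
Proof.
  intros Tcont Mdense HM x y z _ _ _ nxy nyz nxz.
  apply Rle_plus_epsilon; intros eps eps_pos.
  set (K := 6 * (1 + alpha + lambda)).
  set (sep := Rmin (d x y) (Rmin (d y z) (d x z)) / 2).
  set (e := Rmin (eps / K) sep).
  assert (sep_pos : 0 < sep).
  { apply Rdiv_lt_0_compat; [|lra].
    repeat apply Rmin_glb_lt; apply dist_pos; assumption. }
  assert (e_pos : 0 < e) by (apply Rmin_glb_lt; [apply Rdiv_lt_0_compat; unfold K|]; lra).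
  assert (Ke : K * e <= eps).
  { apply (Rle_trans _ (K * (eps / K))); [apply Rmult_le_compat_l; [unfold K; lra | apply Rmin_l]|].
    right; field; unfold K; lra. }
  assert (e_sep : 2 * e <= d x y /\ 2 * e <= d y z /\ 2 * e <= d x z).
  { assert (e_le_sep : e <= sep) by apply Rmin_r.
    pose proof (Rmin_l (d x y) (Rmin (d y z) (d x z))).
    pose proof (Rmin_r (d x y) (Rmin (d y z) (d x z))).
    pose proof (Rmin_l (d y z) (d x z)); pose proof (Rmin_r (d y z) (d x z)).
    unfold sep in e_le_sep; lra. }
  destruct (dense_continuous_approx T M Tcont Mdense x e e_pos) as (x' & Mx' & xx' & Txx').
  destruct (dense_continuous_approx T M Tcont Mdense y e e_pos) as (y' & My' & yy' & Tyy').
  destruct (dense_continuous_approx T M Tcont Mdense z e e_pos) as (z' & Mz' & zz' & Tzz').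
  assert (nxy' : x' <> y') by (apply (neq_of_dist_lt x y); lra).
  assert (nyz' : y' <> z') by (apply (neq_of_dist_lt y z); lra).
  assert (nxz' : x' <> z') by (apply (neq_of_dist_lt x z); lra).
  pose proof (perimeter_inequality_perturb x y z x' y' z' e xx' yy' zz' Txx' Tyy' Tzz'
    (HM x' y' z' Mx' My' Mz' nxy' nyz' nxz')).
  unfold K in Ke; lra.
Qed.

Lemma contracts_perimeters_fixed_points :
  alpha < 1 -> contracts_perimeters (fun _ => True) T alpha lambda ->
  forall a b c, T a = a -> T b = b -> T c = c -> a = b \/ b = c \/ a = c.
Proof.
  intros alpha_lt1 HT a b c Ta Tb Tc.
  destruct (classic (a = b)) as [|nab]; [now left|].
  destruct (classic (b = c)) as [|nbc]; [now right; left|].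
  destruct (classic (a = c)) as [|nac]; [now right; right|].
  exfalso.
  pose proof (HT a b c I I I nab nbc nac) as Habc.
  unfold displacement in Habc; rewrite Ta, Tb, Tc, !dist_refl in Habc.
  pose proof (perimeter_pos a b c nab).
  nra.
Qed.

Lemma displacement_orbit_le x :
  displacement T x (T x) (T (T x))
  <= perimeter x (T x) (T (T x)) + perimeter (T x) (T (T x)) (T (T (T x))) / 2.
Proof.
  unfold displacement, perimeter.
  pose proof (metric_triangle _ _ d_metric (T (T x)) (T x) (T (T (T x)))).
  pose proof (metric_sym _ _ d_metric (T (T x)) (T x)).
  pose proof (metric_sym _ _ d_metric (T x) (T (T (T x)))).
  pose proof (metric_nonneg _ _ d_metric (T (T x)) x).
  lra.
Qed.

Lemma perimeter_orbit_step x :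
  contracts_perimeters (fun _ => True) T alpha lambda ->
  T x <> x -> T (T x) <> T x -> T (T x) <> x ->
  (1 - lambda / 2) * perimeter (T x) (T (T x)) (T (T (T x)))
  <= (alpha + lambda) * perimeter x (T x) (T (T x)).
Proof.
  intros HT nfix1 nfix2 nper2.
  pose proof (HT x (T x) (T (T x)) I I I (not_eq_sym nfix1) (not_eq_sym nfix2)
    (not_eq_sym nper2)) as Hc.
  pose proof (Rmult_le_compat_l lambda _ _ lambda_ge0 (displacement_orbit_le x)).
  lra.
Qed.

End PerimeterContraction.

Lemma orbit_asymptotically_regular (T : X -> X) (alpha lambda : R) x0 :
  0 <= alpha -> 0 <= lambda -> alpha + 3 * lambda / 2 < 1 ->
  contracts_perimeters (fun _ => True) T alpha lambda ->
  (forall x, T x <> x -> T (T x) <> x) ->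
  asymptotically_regular T x0.
Proof.
  intros alpha_ge0 lambda_ge0 Hcoef HT no_per2 eps eps_pos.
  set (x := fun n => iterate T n x0).
  destruct (classic (exists m, T (x m) = x m)) as [[m Hfix] | Hnf].
  - exists m; intros n Hmn.
    rewrite (iterate_from_fixed T x0 m Hfix n Hmn),
      (iterate_from_fixed T x0 m Hfix (S n)), dist_refl by lia.
    exact eps_pos.
  - assert (nfix : forall n, T (x n) <> x n) by (intros n E; apply Hnf; eauto).
    set (u := fun n => perimeter (x n) (x (S n)) (x (S (S n)))).
    set (q := (alpha + lambda) / (1 - lambda / 2)).
    assert (q_bounds : 0 <= q < 1).
    { split; [apply Rmult_le_pos; [lra | left; apply Rinv_0_lt_compat; lra]|].
      apply (Rmult_lt_reg_r (1 - lambda / 2)); [lra|].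
      unfold q, Rdiv; rewrite Rmult_assoc, Rinv_l; lra. }
    assert (u_step : forall n, u (S n) <= q * u n).
    { intros n; apply (Rmult_le_reg_l (1 - lambda / 2)); [lra|].
      replace ((1 - lambda / 2) * (q * u n)) with ((alpha + lambda) * u n)
        by (unfold q; field; lra).
      apply (perimeter_orbit_step T alpha lambda lambda_ge0 (x n) HT (nfix n) (nfix (S n))).
      apply no_per2, nfix. }
    assert (u_ge0 : forall n, 0 <= u n).
    { intros n; unfold u, perimeter.
      pose proof (metric_nonneg _ _ d_metric (x n) (x (S n))).
      pose proof (metric_nonneg _ _ d_metric (x (S n)) (x (S (S n)))).
      pose proof (metric_nonneg _ _ d_metric (x (S (S n))) (x n)).
      lra. }
    destruct (geometric_decay u q q_bounds u_ge0 u_step eps eps_pos) as [N HN].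
    exists N; intros n Hn.
    apply (Rle_lt_trans _ (u n)); [|exact (HN n Hn)].
    unfold u, perimeter.
    pose proof (metric_nonneg _ _ d_metric (x (S n)) (x (S (S n)))).
    pose proof (metric_nonneg _ _ d_metric (x (S (S n))) (x n)).
    fold (x n) (x (S n)); lra.
Qed.

Lemma cluster_point_fixed (T : X -> X) x0 xstar (nk : nat -> nat) :
  metric_continuous d T -> asymptotically_regular T x0 ->
  (forall k, (nk k < nk (S k))%nat) ->
  metric_converges d (fun k => iterate T (nk k) x0) xstar ->
  T xstar = xstar.
Proof.
  intros Tcont Treg nk_incr Hconv.
  apply (metric_eq0 _ _ d_metric), Rle_antisym; [|apply (metric_nonneg _ _ d_metric)].
  apply Rle_plus_epsilon; intros eps eps_pos.
  set (e := eps / 3).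
  assert (e_pos : 0 < e) by (unfold e; lra).
  destruct (Tcont xstar e e_pos) as (delta & delta_pos & Hdelta).
  destruct (Hconv (Rmin delta e)) as [K HK]; [apply Rmin_glb_lt; assumption|].
  destruct (Treg e e_pos) as [N HN].
  set (k := Nat.max K N).
  set (y := iterate T (nk k) x0).
  assert (y_near : d y xstar < Rmin delta e) by (apply HK; lia).
  assert (y_step : d y (T y) < e).
  { apply (HN (nk k)); pose proof (strictly_increasing_ge nk nk_incr k); lia. }
  pose proof (Rmin_l delta e); pose proof (Rmin_r delta e).
  assert (Ty_near : d (T xstar) (T y) < e)
    by (apply Hdelta; rewrite (metric_sym _ _ d_metric); lra).
  pose proof (metric_triangle _ _ d_metric (T xstar) (T y) xstar).
  pose proof (metric_triangle _ _ d_metric (T y) y xstar).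
  pose proof (metric_sym _ _ d_metric (T y) y).
  unfold e in *; lra.
Qed.

End Metric.

Theorem theorem5p2 (X : Type) (d : X -> X -> R) (T : X -> X)
  (M : X -> Prop) (alpha lambda : R) (x0 xstar : X) :
  is_metric X d ->
  (exists a b c : X, a <> b /\ b <> c /\ a <> c) ->
  metric_continuous d T ->
  (forall x, T x <> x -> T (T x) <> x) ->
  metric_dense d M ->
  0 <= alpha -> 0 <= lambda -> 2 * alpha + 3 * lambda / 2 < 1 ->
  (forall x y z, M x -> M y -> M z -> x <> y -> y <> z -> x <> z ->
     d (T x) (T y) + d (T y) (T z) + d (T x) (T z)
     <= alpha * (d x y + d y z + d z x)
        + lambda * (d x (T x) + d y (T y) + d z (T z))) ->
  (exists nk : nat -> nat, (forall k, (nk k < nk (S k))%nat) /\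
     metric_converges d (fun k => iterate T (nk k) x0) xstar) ->
  T xstar = xstar /\
  (forall a b c : X, T a = a -> T b = b -> T c = c -> a = b \/ b = c \/ a = c).
Proof.
  (* |X| >= 3 only keeps condition (ii) from being vacuous. *)
  intros d_metric _ Tcont no_per2 Mdense alpha_ge0 lambda_ge0 Hcoef HM
    (nk & nk_incr & Hconv).
  assert (HT : contracts_perimeters d (fun _ => True) T alpha lambda).
  { apply (contracts_perimeters_dense_extend d d_metric T alpha lambda
      alpha_ge0 lambda_ge0 M Tcont Mdense).
    intros x y z Mx My Mz nxy nyz nxz; unfold perimeter at 1.
    rewrite (metric_sym _ _ d_metric (T z) (T x)).
    exact (HM x y z Mx My Mz nxy nyz nxz). }
  split.
  - apply (cluster_point_fixed d d_metric T x0 xstar nk Tcont); [|assumption..].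
    apply (orbit_asymptotically_regular d d_metric T alpha lambda); auto; lra.
  - apply (contracts_perimeters_fixed_points d d_metric T alpha lambda); auto; lra.
Qed.
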